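(* Let $\Pi$ be an $\mathrm{LP}^{\mathrm{MLN}}$ program such that $\mathrm{SM}'[\Pi]$ is not empty, and let $I$ be an interpretation. The following are equivalent: (1) $I$ is a (probabilistic) stable model of $\Pi$; (2) $I\in\mathrm{SM}'[\Pi]$; (3) $P'_\Pi(I)>0$.
   Context: Signature with finitely many ground atoms; interpretations are sets of ground atoms. A formula is negative if every atom occurrence is in the scope of negation. A rule has the form $A\leftarrow B\wedge N$ ($A$ a possibly empty disjunction of atoms, $B$ a conjunction of atoms, $N$ a negative formula), identified with $B\wedge N\rightarrow A$. The reduct $\Pi^I$ of a ground program consists of $A\leftarrow B$ for rules with $I\models N$; $I$ is a (deterministic) stable model if it is a minimal model of $\Pi^I$. An $\mathrm{LP}^{\mathrm{MLN}}$ program $\Pi$ is a finite set of weighted rules $w:R$, $w$ real (soft) or the symbol $\alpha$ (hard), identified with its ground instance. $\overline{\Pi}$ drops weights; $\Pi_I=\{w:R\in\Pi\mid I\models R\}$; $\Pi^{\rm hard}$, $\Pi^{\rm soft}$ are its hard and soft rules. $\mathrm{SM}[\Pi]=\{I\mid I$ stable model of $\overline{\Pi_I}\}$; with $\alpha$ a real parameter, $W_\Pi(I)=\exp(\sum_{w:R\in\Pi_I}w)$ if $I\in\mathrm{SM}[\Pi]$, else $0$; $P_\Pi(I)=\lim_{\alpha\to\infty}W_\Pi(I)/\sum_{J\in\mathrm{SM}[\Pi]}W_\Pi(J)$; $I$ is a (probabilistic) stable model of $\Pi$ if $P_\Pi(I)\ne0$. $\mathrm{SM}'[\Pi]$ is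 the set of $I$ that are stable models of $\overline{\Pi_I}$ and satisfy $\overline{\Pi^{\rm hard}}$; $W'_\Pi(I)=\exp(\sum_{w:R\in(\Pi^{\rm soft})_I}w)$ if $I\in\mathrm{SM}'[\Pi]$, else $0$; $P'_\Pi(I)=W'_\Pi(I)/\sum_{J\in\mathrm{SM}'[\Pi]}W'_\Pi(J)$. *)

From HB Require Import structures.
From mathcomp Require Import all_boot all_order all_algebra.
From mathcomp Require Import all_classical all_reals all_analysis.
Set Implicit Arguments. Unset Strict Implicit. Unset Printing Implicit Defensive.
Import Order.TTheory GRing.Theory Num.Theory.
Import numFieldNormedType.Exports.
Local Open Scope classical_set_scope.
Local Open Scope ring_scope.

Section LPMLN.
Variable Atom : finType.

Inductive formula :=
| FAtom of Atom
| FTop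
| FBot
| FNeg of formula
| FAnd of formula & formula
| FOr of formula & formula
| FImp of formula & formula.

Fixpoint fsat (I : {set Atom}) (f : formula) : bool :=
  match f with
  | FAtom a => a \in I
  | FTop => true
  | FBot => false
  | FNeg g => ~~ fsat I g
  | FAnd g h => fsat I g && fsat I h
  | FOr g h => fsat I g || fsat I h
  | FImp g h => fsat I g ==> fsat I h
  end.

Fixpoint negative (f : formula) : bool :=
  match f with
  | FAtom _ => false
  | FTop | FBot | FNeg _ => true
  | FAnd g h | FOr g h | FImp g h => negative g && negative h
  end.

(* rule  A <- B /\ N : head disjunction A, positive body conjunction B,
   negative formula N *)
Record rule := Rule { head : seq Atom; pbody : seq Atom; nbody : formula }.

Definition wf_rule (r : rule) : bool := negative (nbody r).

Definition rsat (I : {set Atom}) (r : rule) : bool :=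
  (all (fun a => a \in I) (pbody r) && fsat I (nbody r)) ==>
  has (fun a => a \in I) (head r).

Definition prule := (seq Atom * seq Atom)%type.
Definition prsat (I : {set Atom}) (r : prule) : bool :=
  all (fun a => a \in I) r.2 ==> has (fun a => a \in I) r.1.

Definition reduct (P : seq rule) (I : {set Atom}) : seq prule :=
  [seq (head r, pbody r) | r <- P & fsat I (nbody r)].

Definition pmodel (P : seq prule) (J : {set Atom}) : bool := all (prsat J) P.

Definition minimal_model (P : seq prule) (I : {set Atom}) : bool :=
  pmodel P I && [forall J : {set Atom}, (J \proper I) ==> ~~ pmodel P J].

Definition stable (P : seq rule) (I : {set Atom}) : bool :=
  minimal_model (reduct P I) I.

Variable R : realType.

(* weights: a real number (soft) or the symbol alpha (hard) *)
Inductive weight := Soft of R | Hard.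

Definition wrule := (weight * rule)%type.
Definition program := seq wrule.

Definition wf_program (Pi : program) : bool := all (fun wr => wf_rule wr.2) Pi.

Definition unweight (Pi : program) : seq rule := [seq wr.2 | wr <- Pi].
Definition sat_part (Pi : program) (I : {set Atom}) : program :=
  [seq wr <- Pi | rsat I wr.2].
Definition hard_part (Pi : program) : program :=
  [seq wr <- Pi | if wr.1 is Hard then true else false].
Definition soft_part (Pi : program) : program :=
  [seq wr <- Pi | if wr.1 is Soft _ then true else false].

Definition SM (Pi : program) (I : {set Atom}) : bool :=
  stable (unweight (sat_part Pi I)) I.

Definition wval (alpha : R) (w : weight) : R :=
  match w with Soft x => x | Hard => alpha end.

Definition W (Pi : program) (alpha : R) (I : {set Atom}) : R :=
  if SM Pi I then expR (\sum_(wr <- sat_part Pi I) wval alpha wr.1) else 0.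

Definition P (Pi : program) (I : {set Atom}) : R :=
  lim ((fun alpha : R => W Pi alpha I / \sum_(J : {set Atom}) W Pi alpha J)
         @ +oo%R).

Definition prob_stable (Pi : program) (I : {set Atom}) : Prop := P Pi I != 0.

Definition SM' (Pi : program) (I : {set Atom}) : bool :=
  stable (unweight (sat_part Pi I)) I &&
  all (rsat I) (unweight (hard_part Pi)).

Definition W' (Pi : program) (I : {set Atom}) : R :=
  if SM' Pi I then expR (\sum_(wr <- sat_part (soft_part Pi) I) wval 0 wr.1)
  else 0.

Definition P' (Pi : program) (I : {set Atom}) : R :=
  W' Pi I / \sum_(J : {set Atom}) W' Pi J.

End LPMLN.

(* With alpha as a real parameter, W_Pi(I) = exp(alpha h(I) + s(I)) on SM[Pi],
   where h(I) counts the hard rules satisfied by I and s(I) is its soft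
   weight.  Dividing numerator and denominator of P_Pi by exp(alpha n), n the
   number of hard rules, every term tends to W'_Pi(I): it is constant when I
   satisfies all hard rules, i.e. on SM'[Pi], and decays like exp(-alpha)
   otherwise.  As SM'[Pi] is nonempty, the limiting denominator is positive,
   so P_Pi = P'_Pi, which is positive exactly on SM'[Pi]. *)

From HB Require Import structures.
From mathcomp Require Import all_boot all_order all_algebra.
From mathcomp Require Import all_classical all_reals all_analysis.
From mathcomp Require Import ring.

Set Implicit Arguments.
Unset Strict Implicit.
Unset Printing Implicit Defensive.

Import Order.TTheory GRing.Theory Num.Theory.
Import numFieldNormedType.Exports.
Local Open Scope classical_set_scope.
Local Open Scope ring_scope.

Section HardRules.
Variables (Atom : finType) (R : realType).
Implicit Types (s : program Atom R) (I : {set Atom}).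

Definition nhard s : nat := size (hard_part s).

Lemma hard_part_sat_part s I :
  hard_part (sat_part s I) = sat_part (hard_part s) I.
Proof.
by rewrite /hard_part /sat_part -!filter_predI; apply: eq_filter => wr /=; rewrite andbC.
Qed.

Lemma soft_part_sat_part s I :
  soft_part (sat_part s I) = sat_part (soft_part s) I.
Proof.
by rewrite /soft_part /sat_part -!filter_predI; apply: eq_filter => wr /=; rewrite andbC.
Qed.

Lemma nhard_sat_part s I :
  nhard (sat_part s I) = count (rsat I) (unweight (hard_part s)).
Proof. by rewrite /nhard hard_part_sat_part size_filter count_map. Qed.

Lemma nhard_sat_part_le s I : (nhard (sat_part s I) <= nhard s)%N.
Proof. by rewrite nhard_sat_part (leq_trans (count_size _ _)) ?size_map. Qed.

Lemma eq_nhard_sat_part s I :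
  (nhard (sat_part s I) == nhard s) = all (rsat I) (unweight (hard_part s)).
Proof. by rewrite nhard_sat_part all_count size_map. Qed.

Lemma sum_wval s alpha :
  \sum_(wr <- s) wval alpha wr.1 =
  \sum_(wr <- s) wval 0 wr.1 + alpha * (nhard s)%:R.
Proof.
elim: s => [|[[x|] r] s IH].
- by rewrite !big_nil /nhard /= mulr0 addr0.
- by rewrite !big_cons IH addrA.
- by rewrite !big_cons IH /nhard /= mulrSr mulrDr mulr1 add0r addrCA (addrC alpha).
Qed.

Lemma sum_wval0_soft_part s :
  \sum_(wr <- soft_part s) wval 0 wr.1 = \sum_(wr <- s) wval 0 wr.1.
Proof. by rewrite big_filter big_mkcond; apply: eq_bigr => -[[x|] r]. Qed.

End HardRules.

Section Limits.
Variable R : realType.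

Lemma cvg_expR_mulN_natr (k : nat) :
  (0 < k)%N -> expR (- (x * k%:R)) @[x --> +oo] --> (0 : R).
Proof.
move=> k_gt0; under eq_cvg do rewrite -mulNr expRM_natr.
suff : expR (- x) ^+ k @[x --> +oo] --> (0 : R) ^+ k by rewrite expr0n gtn_eqF.
exact: (continuous_cvg _ (@exprn_continuous R k 0) (@cvgr_expR R)).
Qed.

Lemma lim_ratio_rescaled {T : Type} (F : set_system T) {FF : ProperFilter F}
    (I : finType) (c : T -> R) (f g : I -> T -> R) (l : I -> R) (i : I) :
  (forall x j, f j x = c x * g j x) -> (forall x, c x != 0) ->
  (forall j, g j @ F --> l j) -> \sum_j l j != 0 ->
  lim ((fun x => f i x / \sum_j f j x) @ F) = l i / \sum_j l j.
Proof.
move=> fE c_neq0 g_cvg suml_neq0.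
have -> : (fun x => f i x / \sum_j f j x) = (fun x => g i x / \sum_j g j x).
  apply: funext => x; rewrite fE; under eq_bigr do rewrite fE.
  by rewrite -mulr_sumr invfM mulrACA mulfV ?mul1r.
apply: cvg_lim => //; apply: cvgM; first exact: g_cvg.
apply: cvgV => //; apply: cvg_big => //; exact: add_continuous.
Qed.

End Limits.

Section ProgramWeights.
Variables (Atom : finType) (R : realType) (Pi : program Atom R).
Implicit Types (I : {set Atom}) (alpha : R).

Lemma SM'E I : SM' Pi I = SM Pi I && (nhard (sat_part Pi I) == nhard Pi).
Proof. by rewrite eq_nhard_sat_part. Qed.

Lemma W'E I :
  W' Pi I = if SM' Pi I then expR (\sum_(wr <- sat_part Pi I) wval 0 wr.1) else 0.
Proof. by rewrite /W' -soft_part_sat_part sum_wval0_soft_part. Qed.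

Lemma W'_ge0 I : 0 <= W' Pi I.
Proof. by rewrite /W'; case: ifP => // _; exact: expR_ge0. Qed.

Lemma W'_gt0 I : (0 < W' Pi I) = SM' Pi I.
Proof. by rewrite /W'; case: ifP; rewrite ?expR_gt0 ?ltxx. Qed.

Lemma sum_W'_gt0 : (exists J, SM' Pi J) -> 0 < \sum_J W' Pi J.
Proof.
move=> [J SM'J]; rewrite (bigD1 J) //= ltr_wpDr ?W'_gt0 //.
by apply: sumr_ge0 => *; exact: W'_ge0.
Qed.

Definition W_scaled alpha I : R :=
  if SM Pi I then
    expR (\sum_(wr <- sat_part Pi I) wval 0 wr.1
          - alpha * (nhard Pi - nhard (sat_part Pi I))%:R)
  else 0.

Lemma W_scaledE alpha I :
  W Pi alpha I = expR (alpha * (nhard Pi)%:R) * W_scaled alpha I.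
Proof.
rewrite /W /W_scaled; case: ifP => _; last by rewrite mulr0.
by rewrite -expRD sum_wval natrB ?nhard_sat_part_le //; congr expR; ring.
Qed.

Lemma W_scaled_cvg I : W_scaled alpha I @[alpha --> +oo] --> W' Pi I.
Proof.
rewrite W'E SM'E /W_scaled; case: (SM Pi I) => /=; last exact: cvg_cst.
have [->|ne] := eqVneq (nhard (sat_part Pi I)) (nhard Pi).
  by rewrite subnn; under eq_cvg do rewrite mulr0 subr0; exact: cvg_cst.
have k_gt0 : (0 < nhard Pi - nhard (sat_part Pi I))%N.
  by rewrite subn_gt0 ltn_neqAle ne nhard_sat_part_le.
under eq_cvg do rewrite expRD.
set S := \sum_(wr <- _) _.
suff : expR S * expR (- (x * (nhard Pi - nhard (sat_part Pi I))%:R)) @[x --> +oo]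
    --> expR S * 0 by rewrite mulr0.
by apply: cvgM; [exact: cvg_cst | exact: cvg_expR_mulN_natr].
Qed.

Lemma P_eq_P' I : (exists J, SM' Pi J) -> P Pi I = P' Pi I.
Proof.
move=> SM'_neq0; apply: (lim_ratio_rescaled (f := fun J alpha => W Pi alpha J)).
- exact: W_scaledE.
- by move=> alpha; rewrite gt_eqF ?expR_gt0.
- exact: W_scaled_cvg.
- by rewrite gt_eqF ?sum_W'_gt0.
Qed.

Lemma P'_ge0 I : 0 <= P' Pi I.
Proof. by rewrite divr_ge0 ?W'_ge0 ?sumr_ge0 // => *; exact: W'_ge0. Qed.

Lemma P'_gt0 I : (exists J, SM' Pi J) -> (0 < P' Pi I) = SM' Pi I.
Proof. by move=> /sum_W'_gt0 ?; rewrite /P' pmulr_lgt0 ?invr_gt0 ?W'_gt0. Qed.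

End ProgramWeights.

Theorem proposition5 (Atom : finType) (R : realType) (Pi : program Atom R) :
  wf_program Pi ->
  (exists J : {set Atom}, SM' Pi J) ->
  forall I : {set Atom},
    (prob_stable Pi I <-> SM' Pi I) /\ (SM' Pi I <-> 0 < P' Pi I).
Proof.
(* The rules need not have negative bodies for this. *)
move=> _ SM'_neq0 I; rewrite -P'_gt0 //; split => //.
by rewrite /prob_stable P_eq_P' // lt0r P'_ge0 andbT.
Qed.
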